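(* Let $A\in\mathbb{C}^{m\times n}$. Then the following are equivalent: (1) $A^{\mathfrak{m}}$ exists; (2) there exists $X\in\mathbb{C}^{m\times m}$ such that $A=XAA^{\sim}A$; (3) there exists $Y\in\mathbb{C}^{n\times n}$ such that $A=AA^{\sim}AY$. In this case, for any such $X$ and $Y$, $A^{\mathfrak{m}}=(XA)^{\sim}=(AY)^{\sim}$.
   Context: For a positive integer $k$, the Minkowski metric matrix of order $k$ is $G_k=\mathrm{diag}(1,-I_{k-1})$ (with $G_1=(1)$). For $A\in\mathbb{C}^{m\times n}$, the Minkowski adjoint is $A^{\sim}=G_nA^*G_m$, where $A^*$ is the conjugate transpose. The Minkowski inverse of $A$, denoted $A^{\mathfrak{m}}$, is a matrix $Z\in\mathbb{C}^{n\times m}$ with $AZA=A$, $ZAZ=Z$, $(AZ)^{\sim}=AZ$, $(ZA)^{\sim}=ZA$ (unique if it exists). *)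

From HB Require Import structures.
From mathcomp Require Import all_boot all_order all_algebra.
From mathcomp Require Import reals.
From mathcomp.real_closed Require Import complex.
Set Implicit Arguments. Unset Strict Implicit. Unset Printing Implicit Defensive.
Import Order.TTheory GRing.Theory Num.Theory.
Local Open Scope ring_scope.

Definition ctrmx (C : numClosedFieldType) (m n : nat) (A : 'M[C]_(m, n)) : 'M[C]_(n, m) :=
  (map_mx Num.conj A)^T.

Definition minkG (C : numClosedFieldType) (k : nat) : 'M[C]_k :=
  \matrix_(i < k, j < k) (if i == j then (if (i : nat) == 0%N then 1 else -1) else 0).

Definition madj (C : numClosedFieldType) (m n : nat) (A : 'M[C]_(m, n)) : 'M[C]_(n, m) :=
  minkG C n *m ctrmx A *m minkG C m.

Definition is_minkowski_inverse (C : numClosedFieldType) (m n : nat)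
    (A : 'M[C]_(m, n)) (Z : 'M[C]_(n, m)) : Prop :=
  [/\ A *m Z *m A = A, Z *m A *m Z = Z,
      madj (A *m Z) = A *m Z & madj (Z *m A) = Z *m A].

From HB Require Import structures.
From mathcomp Require Import all_boot all_order all_algebra.
From mathcomp Require Import reals.
From mathcomp.real_closed Require Import complex.
Import Order.TTheory GRing.Theory Num.Theory.
Local Open Scope ring_scope.

(* The Minkowski adjoint is an involutive anti-automorphism of the matrix
   calculus, and everything except the equivalence (2) <-> (3) is an identity
   in such a calculus.  If A = X A A~ A and A = A A~ A Y, then Z := (XA)~ and
   Z' := (AY)~ satisfy A~ = A~ A Z and A~ = Z' A A~, whence Z = Z' A Z = Z';
   moreover A Z = X A A~ and Z A = A~ A Y, which are self-adjoint, so Z is a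
   Minkowski inverse, unique by Penrose's argument.  Conversely a Minkowski
   inverse Z gives A = (Z~ Z) A A~ A.  Finally, both (2) and (3) say that
   A A~ A has the rank of A, which makes them equivalent. *)

Section FactorRank.
Variable F : fieldType.

Lemma mx_lfactor_rank m n p (A : 'M[F]_(m, n)) (P : 'M[F]_(p, m)) :
  (exists X, A = X *m (P *m A)) <-> (\rank A <= \rank (P *m A))%N.
Proof.
split=> [[X {1}->]|]; first exact: mxrankM_maxr.
by rewrite (geq_leqif (mxrank_leqif_sup (submxMl P A))) => /submxP.
Qed.

Lemma mx_rfactor_rank m n p (A : 'M[F]_(m, n)) (Q : 'M[F]_(n, p)) :
  (exists Y, A = A *m Q *m Y) <-> (\rank A <= \rank (A *m Q))%N.
Proof.
rewrite -mxrank_tr -[X in (_ <= X)%N]mxrank_tr trmx_mul -mx_lfactor_rank.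
split=> [[Y EY]|[X EX]].
  by exists Y^T; rewrite {1}EY !trmx_mul.
by exists X^T; apply: trmx_inj; rewrite !trmx_mul trmxK -EX.
Qed.

Lemma mx_lfactor_rfactor m n (A : 'M[F]_(m, n)) (B : 'M[F]_(n, m)) :
  (exists X, A = X *m A *m B *m A) <-> (exists Y, A = A *m B *m A *m Y).
Proof.
have -> : (exists X, A = X *m A *m B *m A) <-> exists X, A = X *m (A *m B *m A).
  by split=> -[X EX]; exists X; rewrite {1}EX !mulmxA.
by rewrite mx_lfactor_rank -mulmxA mx_rfactor_rank.
Qed.

End FactorRank.

Arguments mx_lfactor_rfactor {F m n}.

Section MinkowskiAdjoint.
Variable C : numClosedFieldType.

Lemma minkG_sqr k : minkG C k *m minkG C k = 1%:M.
Proof.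
apply/matrixP => i j; rewrite !mxE (bigD1 i) //= big1 => [|l /negbTE nli].
  rewrite !mxE eqxx addr0; have [->|nij] := eqVneq i j; last by rewrite mulr0.
  by case: ifP; rewrite ?mulr1 ?mulrNN ?mulr1.
by rewrite !mxE eq_sym nli mul0r.
Qed.

Lemma ctrmx_minkG k : ctrmx (minkG C k) = minkG C k.
Proof.
apply/matrixP => i j; rewrite /ctrmx !mxE eq_sym.
have [->|_] := eqVneq j i; last by rewrite rmorph0.
by case: ifP; rewrite ?rmorphN rmorph1.
Qed.

Lemma ctrmxM m n p (A : 'M[C]_(m, n)) (B : 'M[C]_(n, p)) :
  ctrmx (A *m B) = ctrmx B *m ctrmx A.
Proof. by rewrite /ctrmx map_mxM trmx_mul. Qed.

Lemma ctrmxK m n : cancel (@ctrmx C m n) (@ctrmx C n m).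
Proof. by move=> A; apply/matrixP => i j; rewrite /ctrmx !mxE conjCK. Qed.

Lemma madjM m n p (A : 'M[C]_(m, n)) (B : 'M[C]_(n, p)) :
  madj (A *m B) = madj B *m madj A.
Proof.
rewrite /madj ctrmxM !mulmxA; congr (_ *m _).
by rewrite -[_ *m minkG C n *m minkG C n]mulmxA minkG_sqr mulmx1.
Qed.

Lemma madjK m n : cancel (@madj C m n) (@madj C n m).
Proof.
move=> A; rewrite /madj !ctrmxM ctrmxK !ctrmx_minkG !mulmxA minkG_sqr mul1mx.
by rewrite -mulmxA minkG_sqr mulmx1.
Qed.

End MinkowskiAdjoint.

Arguments madjM {C m n p}.
Arguments madjK {C m n}.

(* The body of [madj] is a matrix product, so unrestricted rewrites with
   [mulmxA] or [madjM] may match inside it; below they are instantiated or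
   localised explicitly. *)
Section MinkowskiInverse.
Variables (C : numClosedFieldType) (m n : nat) (A : 'M[C]_(m, n)).

Lemma minkowski_inverse_unique Z1 Z2 :
  is_minkowski_inverse A Z1 -> is_minkowski_inverse A Z2 -> Z1 = Z2.
Proof.
case=> AZA1 ZAZ1 AZ1 ZA1 [AZA2 ZAZ2 AZ2 ZA2].
have AZ1E : A *m Z1 = A *m Z1 *m (A *m Z2).
  by rewrite -[LHS]AZ1 -[in LHS]AZA2 -(mulmxA (A *m Z2)) madjM AZ1 AZ2.
have ZA2E : Z2 *m A = Z1 *m A *m (Z2 *m A).
  by rewrite -[LHS]ZA2 -[in LHS]AZA1 !mulmxA -(mulmxA (Z2 *m A)) madjM ZA1 ZA2 mulmxA.
have Z1E : Z1 = Z1 *m A *m Z2 by rewrite -[LHS]ZAZ1 -mulmxA AZ1E !mulmxA ZAZ1.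
have Z2E : Z2 = Z1 *m A *m Z2 by rewrite -[LHS]ZAZ2 ZA2E -mulmxA ZAZ2.
by rewrite [LHS]Z1E -Z2E.
Qed.

Lemma minkowski_inverse_lfactor Z :
  is_minkowski_inverse A Z -> A = madj Z *m Z *m A *m madj A *m A.
Proof.
case=> AZA _ AZ ZA.
have AE : A = madj Z *m madj A *m A by rewrite -madjM AZ AZA.
have adjAE : madj A = Z *m A *m madj A.
  by rewrite -[in LHS]AZA -mulmxA madjM ZA.
by rewrite {1}AE {1}adjAE !mulmxA.
Qed.

Variables (X : 'M[C]_m) (Y : 'M[C]_n).
Hypotheses (AXE : A = X *m A *m madj A *m A) (AYE : A = A *m madj A *m A *m Y).

Lemma madj_lfactor_mul : madj A = madj A *m A *m madj (X *m A).
Proof. by rewrite [in LHS]AXE madjM [madj (_ *m madj A)]madjM madjK mulmxA. Qed.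

Lemma madj_mul_rfactor : madj A = madj (A *m Y) *m A *m madj A.
Proof.
by rewrite [in LHS]AYE -(mulmxA _ A Y) madjM [madj (_ *m madj A)]madjM madjK mulmxA.
Qed.

Lemma madj_lfactor_absorb :
  madj (X *m A) = madj (A *m Y) *m A *m madj (X *m A).
Proof. by rewrite {1}(madjM X A) {1}madj_mul_rfactor -mulmxA -(madjM X A). Qed.

Lemma madj_lfactor_rfactor : madj (X *m A) = madj (A *m Y).
Proof.
rewrite madj_lfactor_absorb {2}(madjM A Y) madj_lfactor_mul.
by rewrite 2!(mulmxA (madj Y)) -(madjM A Y).
Qed.

Lemma is_minkowski_inverse_madj_lfactor : is_minkowski_inverse A (madj (X *m A)).
Proof.
have AZE : A *m madj (X *m A) = X *m A *m madj A.
  rewrite [in RHS]madj_lfactor_mul (mulmxA (X *m A)).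
  by rewrite (mulmxA (X *m A) (madj A)) -AXE.
have ZAE : madj (X *m A) *m A = madj A *m A *m Y.
  rewrite madj_lfactor_rfactor [in RHS]madj_mul_rfactor.
  by rewrite -3!(mulmxA (madj (A *m Y))) -AYE.
split.
- by rewrite AZE -AXE.
- by rewrite {1}madj_lfactor_rfactor -madj_lfactor_absorb.
- by rewrite {1}AZE madjM madjK AZE.
- rewrite {1}ZAE madjM [madj (madj A *m A)]madjM madjK.
  by rewrite madj_lfactor_rfactor (madjM A Y) mulmxA.
Qed.

End MinkowskiInverse.

Arguments minkowski_inverse_unique {C m n A}.
Arguments minkowski_inverse_lfactor {C m n A}.
Arguments madj_lfactor_rfactor {C m n A X Y}.
Arguments is_minkowski_inverse_madj_lfactor {C m n A X Y}.

Theorem theorem6p1 (R : realType) (m n : nat) (Hm : (0 < m)%N) (Hn : (0 < n)%N)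
    (A : 'M[R[i]]_(m, n)) :
  [/\ (exists Z, is_minkowski_inverse A Z) <->
        (exists X : 'M[R[i]]_m, A = X *m A *m madj A *m A),
      (exists X : 'M[R[i]]_m, A = X *m A *m madj A *m A) <->
        (exists Y : 'M[R[i]]_n, A = A *m madj A *m A *m Y),
      (forall (X : 'M[R[i]]_m) (Z : 'M[R[i]]_(n, m)),
         A = X *m A *m madj A *m A -> is_minkowski_inverse A Z ->
         Z = madj (X *m A))
    & (forall (Y : 'M[R[i]]_n) (Z : 'M[R[i]]_(n, m)),
         A = A *m madj A *m A *m Y -> is_minkowski_inverse A Z ->
         Z = madj (A *m Y))].
Proof.
have XY := mx_lfactor_rfactor A (madj A).
split=> //.
- split=> [[Z /minkowski_inverse_lfactor AE]|[X AXE]]; first by exists (madj Z *m Z); exact: AE.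
  have [Y AYE] := XY.1 (ex_intro _ X AXE).
  by exists (madj (X *m A)); exact: is_minkowski_inverse_madj_lfactor AXE AYE.
- move=> X Z AXE /minkowski_inverse_unique; apply.
  have [Y AYE] := XY.1 (ex_intro _ X AXE).
  exact: is_minkowski_inverse_madj_lfactor AXE AYE.
- move=> Y Z AYE /minkowski_inverse_unique Zuniq.
  have [X AXE] := XY.2 (ex_intro _ Y AYE).
  rewrite -(madj_lfactor_rfactor AXE AYE); apply: Zuniq.
  exact: is_minkowski_inverse_madj_lfactor AXE AYE.
Qed.
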